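(* Let $R$ be a local ring, $s\in R$ a central element, and let $E$ be an idempotent of $M_2(R;s)$ with $E\neq 0$ and $E\neq I_2$. Then: (1) if $s\in U(R)$, then $E$ is similar to $\left[\begin{smallmatrix} 1&0\\ 0&0\end{smallmatrix}\right]$; (2) if $s\in J(R)$, then $E$ is similar to $\left[\begin{smallmatrix} 1&0\\ 0&0\end{smallmatrix}\right]$ or $E$ is similar to $\left[\begin{smallmatrix} 0&0\\ 0&1\end{smallmatrix}\right]$.
   Context: All rings are associative with identity. A ring $R$ is local if $R/J(R)$ is a division ring, where $J(R)$ is the Jacobson radical; $U(R)$ is the group of units. For a ring $R$ and a central element $s\in R$, $M_2(R;s)$ denotes the ring whose elements are the $2\times 2$ arrays $\left[\begin{smallmatrix} a&b\\ c&d\end{smallmatrix}\right]$ with $a,b,c,d\in R$, with componentwise addition and multiplication $\left[\begin{smallmatrix} a&b\\ c&d\end{smallmatrix}\right]\left[\begin{smallmatrix} a'&b'\\ c'&d'\end{smallmatrix}\right]=\left[\begin{smallmatrix} aa'+s^2bc'&ab'+bd'\\ ca'+dc'&s^2cb'+dd'\end{smallmatrix}\right]$, with identity $I_2$. Two elements $A,B\in M_2(R;s)$ are similar if $B=P^{-1}AP$ for some unit $P$ of $M_2(R;s)$. *)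

From HB Require Import structures.
From mathcomp Require Import all_boot all_order all_algebra.
Set Implicit Arguments. Unset Strict Implicit. Unset Printing Implicit Defensive.
Import GRing.Theory.
Local Open Scope ring_scope.

Definition in_units (R : unitRingType) (x : R) : Prop := x \is a GRing.unit.

Definition jacobson (R : unitRingType) (x : R) : Prop :=
  forall y : R, (1 - y * x) \is a GRing.unit.

(* R local: R/J(R) is a division ring, i.e. the quotient is nontrivial
   (1 \notin J(R)) and every class x + J(R) with x \notin J(R) has a
   two-sided inverse modulo J(R). *)
Definition local_ring (R : unitRingType) : Prop :=
  ~ jacobson (1 : R) /\
  forall x : R, ~ jacobson x ->
    exists y : R, jacobson (x * y - 1) /\ jacobson (y * x - 1).

Definition central (R : unitRingType) (s : R) : Prop := forall x : R, s * x = x * s.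

Record mat2 (R : Type) := Mat2 { m11 : R; m12 : R; m21 : R; m22 : R }.

Section M2s.
Variables (R : unitRingType) (s : R).

Definition mul2 (A B : mat2 R) : mat2 R :=
  Mat2 (m11 A * m11 B + s ^+ 2 * m12 A * m21 B)
       (m11 A * m12 B + m12 A * m22 B)
       (m21 A * m11 B + m22 A * m21 B)
       (s ^+ 2 * m21 A * m12 B + m22 A * m22 B).

Definition I2 : mat2 R := Mat2 1 0 0 1.
Definition Z2 : mat2 R := Mat2 0 0 0 0.

Definition idempotent2 (E : mat2 R) : Prop := mul2 E E = E.

Definition similar2 (A B : mat2 R) : Prop :=
  exists P Q : mat2 R, mul2 P Q = I2 /\ mul2 Q P = I2 /\ B = mul2 (mul2 Q A) P.
End M2s.

(* Over a local ring every element is a unit or lies in J(R), and the only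
   idempotents are 0 and 1.  Let E = [a b; c d] be idempotent.  If a is a unit,
   conjugating by [a 0; c 1] makes E upper triangular with corner 1; its other
   diagonal entry is an idempotent of R, and E ~ diag(1,0) unless E = I.  If d is
   a unit, the symmetric argument gives E ~ diag(0,1).  If a and d both lie in
   J(R), idempotence forces E = 0.  Finally, when s is a unit, the swap
   [0 1; 1 0] (with inverse s^-2 [0 1; 1 0]) conjugates diag(0,1) to diag(1,0). *)
Set Warnings "-notation-overridden,-ambiguous-paths".
From mathcomp Require Import all_boot all_order all_algebra.
From Stdlib Require Import Classical.
Set Implicit Arguments. Unset Strict Implicit.
Import GRing.Theory.
Local Open Scope ring_scope.

Section Jacobson.
Variable R : unitRingType.

Lemma jacobson_nonunit (x : R) : jacobson x -> x \isn't a GRing.unit.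
Proof. by move=> Jx; apply/negP=> Ux; move: (Jx x^-1); rewrite mulVr // subrr unitr0. Qed.

Lemma jacobson_unit1B (x : R) : jacobson x -> (1 - x) \is a GRing.unit.
Proof. by move=> Jx; move: (Jx 1); rewrite mul1r. Qed.

Lemma jacobsonMl (r x : R) : jacobson x -> jacobson (r * x).
Proof. by move=> Jx y; rewrite mulrA. Qed.

Lemma jacobsonD (x y : R) : jacobson x -> jacobson y -> jacobson (x + y).
Proof.
move=> Jx Jy z; have Ux := Jx z.
have -> : 1 - z * (x + y) = (1 - z * x) * (1 - (1 - z * x)^-1 * (z * y)).
  by rewrite mulrBr mulr1 mulVKr // mulrDr opprD addrA.
by rewrite unitrMr // mulrA Jy.
Qed.

Lemma jacobsonB1_unit (x : R) : jacobson (x - 1) -> x \is a GRing.unit.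
Proof. by move=> J; move: (J (-1)); rewrite mulN1r opprK addrCA subrr addr0. Qed.

End Jacobson.

Section LocalRing.
Variable R : unitRingType.
Hypothesis localR : local_ring R.

Lemma local_unit_or_jacobson (x : R) : x \is a GRing.unit \/ jacobson x.
Proof.
have [Jx | nJx] := classic (jacobson x); first by right.
left; have [y [Jxy Jyx]] := localR.2 x nJx.
have Uxy := jacobsonB1_unit Jxy; have Uyx := jacobsonB1_unit Jyx.
have rinv : x * (y * (x * y)^-1) = 1 by rewrite mulrA mulrV.
have linv : (y * x)^-1 * y * x = 1 by rewrite -mulrA mulVr.
have left_eq_right : (y * x)^-1 * y = y * (x * y)^-1.
  by rewrite -[LHS]mulr1 -rinv mulrA linv mul1r.
by apply/unitrP; exists (y * (x * y)^-1); rewrite -{1}left_eq_right.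
Qed.

Lemma local_unit_of_rinv (x z : R) : x * z = 1 -> x \is a GRing.unit.
Proof.
move=> xz1; have [// | Jx] := local_unit_or_jacobson x.
(* z x is an idempotent with 1 - z x a unit, so z x = 0 and 1 = x (z x) z = 0 *)
have Uzx : (1 - z * x) \is a GRing.unit by apply: Jx.
have zx_idem : (1 - z * x) * (z * x) = 0.
  by rewrite mulrBl mul1r mulrA -(mulrA z) xz1 mulr1 subrr.
have zx0 : z * x = 0 by rewrite -(mulKr Uzx (z * x)) zx_idem mulr0.
have : (1 : R) = 0 by rewrite -xz1 -[x * z]mulr1 -xz1 mulrA -(mulrA x) zx0 mulr0 mul0r.
by move/eqP; rewrite oner_eq0.
Qed.

Lemma local_idem01 (x : R) : x * x = x -> x = 0 \/ x = 1.
Proof.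
move=> xx; have [Ux | Jx] := local_unit_or_jacobson x.
  by right; rewrite -(mulKr Ux x) xx mulVr.
left; have U1x := jacobson_unit1B Jx.
have h : (1 - x) * x = 0 by rewrite mulrBl mul1r xx subrr.
by rewrite -(mulKr U1x x) h mulr0.
Qed.

Lemma local_jacobson_intertwine (c d u : R) :
  jacobson d -> u \is a GRing.unit -> c * u = d * c -> jacobson c.
Proof.
move=> Jd Uu cu_dc; have [Uc | //] := local_unit_or_jacobson c.
have Udc : d * c \is a GRing.unit by rewrite -cu_dc unitrMr.
have /negP[] := jacobson_nonunit Jd.
by apply: (@local_unit_of_rinv _ (c * (d * c)^-1)); rewrite mulrA mulrV.
Qed.

End LocalRing.

Section MatrixRing.
Variables (R : unitRingType) (s : R).
Hypothesis s_central : central s.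

Lemma mulr_s2C (x : R) : x * s ^+ 2 = s ^+ 2 * x.
Proof. by rewrite expr2 mulrA -s_central -mulrA -s_central mulrA. Qed.

Lemma mul2A (A B C : mat2 R) : mul2 s (mul2 s A B) C = mul2 s A (mul2 s B C).
Proof.
case: A B C => a1 b1 c1 d1 [a2 b2 c2 d2] [a3 b3 c3 d3]; rewrite /mul2 /=.
by congr Mat2; rewrite !(mulrDl, mulrDr, mulrA, mulr_s2C) addrACA.
Qed.

Lemma mul1_2 (A : mat2 R) : mul2 s (I2 R) A = A.
Proof.
by case: A => a b c d; rewrite /mul2 /=; congr Mat2;
  rewrite !(mul1r, mul0r, mulr0, addr0, add0r).
Qed.

Lemma mul2_1 (A : mat2 R) : mul2 s A (I2 R) = A.
Proof.
by case: A => a b c d; rewrite /mul2 /=; congr Mat2;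
  rewrite !(mulr1, mul0r, mulr0, addr0, add0r).
Qed.

Lemma similar2_trans (A B C : mat2 R) :
  similar2 s A B -> similar2 s B C -> similar2 s A C.
Proof.
move=> [P1 [Q1 [PQ1 [QP1 ->]]]] [P2 [Q2 [PQ2 [QP2 ->]]]].
exists (mul2 s P1 P2), (mul2 s Q2 Q1); split; [|split].
- by rewrite mul2A -(mul2A P2) PQ2 mul1_2 PQ1.
- by rewrite mul2A -(mul2A Q1) QP1 mul1_2 QP2.
- by rewrite !mul2A.
Qed.

Lemma similar2_idempotent (A B : mat2 R) :
  similar2 s A B -> idempotent2 s A -> idempotent2 s B.
Proof.
move=> [P [Q [PQ [_ ->]]]] AA; rewrite /idempotent2 !mul2A.
by rewrite -(mul2A P Q) PQ mul1_2 -(mul2A A A P) AA.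
Qed.

Lemma similar2_neqI (A B : mat2 R) :
  similar2 s A B -> A <> I2 R -> B <> I2 R.
Proof.
move=> [P [Q [PQ [_ ->]]]] nAI BI; apply: nAI.
have <- : mul2 s P (mul2 s (mul2 s (mul2 s Q A) P) Q) = A.
  by rewrite !mul2A PQ mul2_1 -mul2A PQ mul1_2.
by rewrite BI mul1_2 PQ.
Qed.

End MatrixRing.

Ltac mat2_congr := rewrite /mul2 /I2 /=; congr Mat2;
  rewrite ?(mul1r, mulr1, mulr0, mul0r, addr0, add0r, subrr, mulNr, mulrN,
            addNr, addrN, opprK, oppr0).

Section Idempotents.
Variables (R : unitRingType) (s : R).
Hypothesis localR : local_ring R.
Hypothesis s_central : central s.

Lemma upper_idempotent_similar (b d : R) :
  idempotent2 s (Mat2 1 b 0 d) -> Mat2 1 b 0 d <> I2 R ->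
  similar2 s (Mat2 1 b 0 d) (Mat2 1 0 0 0).
Proof.
case=> _ e12 _ e22 nI; move: e22; rewrite mulr0 mul0r add0r => dd.
have [-> | d1] := local_idem01 localR dd.
  by exists (Mat2 1 (-b) 0 1), (Mat2 1 b 0 1); split; [|split]; mat2_congr.
move: e12; rewrite d1 mul1r mulr1 => bb.
have b0 : b = 0 by apply: (@addrI _ b); rewrite bb addr0.
by case: nI; rewrite b0 d1.
Qed.

Lemma lower_idempotent_similar (a c : R) :
  idempotent2 s (Mat2 a 0 c 1) -> Mat2 a 0 c 1 <> I2 R ->
  similar2 s (Mat2 a 0 c 1) (Mat2 0 0 0 1).
Proof.
case=> e11 _ e21 _ nI; move: e11; rewrite mulr0 mul0r addr0 => aa.
have [-> | a1] := local_idem01 localR aa.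
  by exists (Mat2 1 0 (-c) 1), (Mat2 1 0 c 1); split; [|split]; mat2_congr.
move: e21; rewrite a1 mul1r mulr1 => cc.
have c0 : c = 0 by apply: (@addrI _ c); rewrite cc addr0.
by case: nI; rewrite c0 a1.
Qed.

Lemma idempotent_unit11_similar (a b c d : R) :
  idempotent2 s (Mat2 a b c d) -> Mat2 a b c d <> I2 R ->
  a \is a GRing.unit -> similar2 s (Mat2 a b c d) (Mat2 1 0 0 0).
Proof.
move=> EE nI Ua; have [e11 e12 e21 e22] := EE.
pose d' := s ^+ 2 * - (c * a^-1) * b + d.
have to_upper : similar2 s (Mat2 a b c d) (Mat2 1 (a^-1 * b) 0 d').
  exists (Mat2 a 0 c 1), (Mat2 a^-1 0 (-(c * a^-1)) 1); split; [|split].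
  - by mat2_congr; rewrite ?mulrV.
  - by mat2_congr; rewrite ?mulVr // -?mulrA ?mulVr ?mulr1 ?addNr.
  - rewrite /d' mul2A //.
    have -> : mul2 s (Mat2 a b c d) (Mat2 a 0 c 1) = Mat2 a b c d by mat2_congr.
    by mat2_congr; rewrite ?mulVr // -?mulrA ?mulVr ?mulr1 ?addNr.
apply: (similar2_trans s_central to_upper); apply: upper_idempotent_similar.
- exact: (similar2_idempotent s_central to_upper EE).
- exact: (similar2_neqI s_central to_upper nI).
Qed.

Lemma idempotent_unit22_similar (a b c d : R) :
  idempotent2 s (Mat2 a b c d) -> Mat2 a b c d <> I2 R ->
  d \is a GRing.unit -> similar2 s (Mat2 a b c d) (Mat2 0 0 0 1).
Proof.
move=> EE nI Ud; have [e11 e12 e21 e22] := EE.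
pose a' := a + s ^+ 2 * - (b * d^-1) * c.
have to_lower : similar2 s (Mat2 a b c d) (Mat2 a' 0 (d^-1 * c) 1).
  exists (Mat2 1 b 0 d), (Mat2 1 (-(b * d^-1)) 0 d^-1); split; [|split].
  - by mat2_congr; rewrite ?mulrV // ?addNr.
  - by mat2_congr; rewrite ?mulVr // -?mulrA ?mulVr ?mulr1 ?addrN.
  - rewrite /a' mul2A //.
    have -> : mul2 s (Mat2 a b c d) (Mat2 1 b 0 d) = Mat2 a b c d by mat2_congr.
    by mat2_congr; rewrite ?mulVr // -?mulrA ?mulVr ?mulr1 ?addrN.
apply: (similar2_trans s_central to_lower); apply: lower_idempotent_similar.
- exact: (similar2_idempotent s_central to_lower EE).
- exact: (similar2_neqI s_central to_lower nI).
Qed.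

Lemma idempotent_jacobson_diag_eq0 (a b c d : R) :
  idempotent2 s (Mat2 a b c d) -> jacobson a -> jacobson d -> Mat2 a b c d = Z2 R.
Proof.
case=> e11 e12 e21 e22 Ja Jd.
have U1a := jacobson_unit1B Ja; have U1d := jacobson_unit1B Jd.
have cU_dc : c * (1 - a) = d * c by rewrite mulrBr mulr1 -{1}e21 addrC addKr.
have bU_ab : b * (1 - d) = a * b by rewrite mulrBr mulr1 -{1}e12 addrK.
have Jc := local_jacobson_intertwine localR Jd U1a cU_dc.
have b_eq : b = a * b * (1 - d)^-1 by rewrite -bU_ab mulrK.
(* a = a^2 + s^2 b c = a k, and k lies in J(R), so 1 - k is a unit *)
pose k := a + s ^+ 2 * b * (1 - d)^-1 * c.
have U1k : (1 - k) \is a GRing.unit.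
  by apply/jacobson_unit1B/jacobsonD => //; apply: jacobsonMl.
have a_1k : a * (1 - k) = 0.
  rewrite /k mulrBr mulr1 mulrDr.
  have -> : a * (s ^+ 2 * b * (1 - d)^-1 * c) = s ^+ 2 * b * c.
    by rewrite 3!(mulrA a) mulr_s2C // -(mulrA _ a b) -(mulrA _ (a * b)) -b_eq.
  by rewrite e11 subrr.
have a0 : a = 0 by rewrite -(mulrK U1k a) a_1k mul0r.
have b0 : b = 0 by rewrite b_eq a0 !mul0r.
have c0 : c = 0.
  have h : (1 - d) * c = 0 by rewrite mulrBl mul1r -cU_dc a0 subr0 mulr1 subrr.
  by rewrite -(mulKr U1d c) h mulr0.
rewrite b0 mulr0 add0r in e22.
have [d0 | d1] := local_idem01 localR e22; first by rewrite a0 b0 c0 d0.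
by case: localR.1; rewrite -d1.
Qed.

Lemma idempotent_similar_diag (E : mat2 R) :
  idempotent2 s E -> E <> Z2 R -> E <> I2 R ->
  similar2 s E (Mat2 1 0 0 0) \/ similar2 s E (Mat2 0 0 0 1).
Proof.
case: E => a b c d EE nZ nI.
have [Ua | Ja] := local_unit_or_jacobson localR a.
  by left; apply: idempotent_unit11_similar.
have [Ud | Jd] := local_unit_or_jacobson localR d.
  by right; apply: idempotent_unit22_similar.
by case: nZ; apply: idempotent_jacobson_diag_eq0.
Qed.

End Idempotents.

Lemma similar2_diag_swap (R : unitRingType) (s : R) :
  s \is a GRing.unit -> similar2 s (Mat2 0 0 0 1) (Mat2 1 0 0 0).
Proof.
move=> Us; have Us2 : s ^+ 2 \is a GRing.unit by rewrite unitrX.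
exists (Mat2 0 1 1 0), (Mat2 0 (s ^+ 2)^-1 (s ^+ 2)^-1 0); split; [|split];
  by mat2_congr; rewrite ?mulrV ?mulVr.
Qed.

Theorem lemma2p7 (R : unitRingType) (s : R) (E : mat2 R) :
  local_ring R -> central s ->
  idempotent2 s E -> E <> Z2 R -> E <> I2 R ->
  (in_units s -> similar2 s E (Mat2 1 0 0 0)) /\
  (jacobson s ->
     similar2 s E (Mat2 1 0 0 0) \/ similar2 s E (Mat2 0 0 0 1)).
Proof.
move=> localR s_central EE nZ nI.
have diag := idempotent_similar_diag localR s_central EE nZ nI.
split=> [Us | _]; last exact: diag.
have [// | E_e22] := diag.
exact: (similar2_trans s_central E_e22 (similar2_diag_swap Us)).
Qed.
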